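(* Let $(\mathbf d_n)$ be a family of degree sequences and $v_n\in[n]$. Assume, as $n\to\infty$, \[\sigma^2(\mathbf d_n)=o\Big(\frac{n}{(\log n)^3}\Big),\quad \sigma^2(\mathbf d_n)=\omega\Big(\frac{\log n}{n^{1/3}}\Big),\quad \Delta(\mathbf d_n)=o\Big(\sqrt{\frac{n\sigma^2(\mathbf d_n)}{(\log n)^3}}\Big).\] Then $\lim_{n\to\infty}\mathbb P(\mathfrak t_n(v_n)=0)=0$.
   Context: A degree sequence is $\mathbf d_n=(d_{n,1},\ldots,d_{n,n})\in\mathbb N_0^n$ with $\sum_j d_{n,j}=n$. Let $\mathfrak F(\mathbf d_n)=\{f:[n]\to[n]: |f^{-1}(\{i\})|=d_{n,i}\ \forall i\}$ and $F$ uniform on $\mathfrak F(\mathbf d_n)$. For $f:V\to V$, $v\in V$: six-length $\mathfrak s_f(v)=\min\{k\in\mathbb N: f^{(k)}(v)\in\{f^{(j)}(v):0\le j\le k-1\}\}$; tail-length $\mathfrak t_f(v)$ is the unique integer with $0\le\mathfrak t_f(v)<\mathfrak s_f(v)$ and $f^{(\mathfrak s_f(v))}(v)=f^{(\mathfrak t_f(v))}(v)$. $\mathfrak t_n(v)=\mathfrak t_F(v)$. $\Delta(\mathbf d_n)=\max_j d_{n,j}$, $\sigma^2(\mathbf d_n)=\frac1n\sum_j d_{n,j}^2-1$. $a_n=\omega(b_n)$ means $b_n=o(a_n)$. *)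

From mathcomp Require Import all_boot.
From Stdlib Require Import Reals.

Set Implicit Arguments.
Unset Strict Implicit.
Unset Printing Implicit Defensive.

(* six-length: s_f(v) = min { k >= 1 : f^(k)(v) \in {f^(j)(v) : 0 <= j <= k-1} }.
   On a finite type such a k exists with k <= #|T| (pigeonhole), so we search
   k in [1, #|T|]; [find] returns the 0-based position, hence the [.+1]. *)
Definition six_len (T : finType) (f : T -> T) (v : T) : nat :=
  (find (fun k => iter k f v \in [seq iter j f v | j <- iota 0 k])
        (iota 1 #|T|)).+1.

Definition tail_len (T : finType) (f : T -> T) (v : T) : nat :=
  index (iter (six_len f v) f v) [seq iter j f v | j <- iota 0 (six_len f v)].

Definition has_degrees (n : nat) (d : 'I_n -> nat) (f : {ffun 'I_n -> 'I_n}) : bool :=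
  [forall i, #|[pred j | f j == i]| == d i].

Definition is_degree_seq (n : nat) (d : 'I_n -> nat) : Prop :=
  (\sum_(j < n) d j)%N = n.

(* P(t_n(v) = 0) for F uniform on F(d) *)
Definition prob_tail0 (n : nat) (d : 'I_n -> nat) (v : 'I_n) : R :=
  Rdiv (INR #|[pred f : {ffun 'I_n -> 'I_n} | has_degrees d f && (tail_len f v == 0%N)]|)
       (INR #|[pred f : {ffun 'I_n -> 'I_n} | has_degrees d f]|).

Definition Delta_max (n : nat) (d : 'I_n -> nat) : nat := (\max_(j < n) d j)%N.

Definition sigma_sq (n : nat) (d : 'I_n -> nat) : R :=
  Rminus (Rdiv (INR (\sum_(j < n) d j ^ 2)%N) (INR n)) 1.

Definition little_o (a b : nat -> R) : Prop :=
  forall eps : R, Rlt 0 eps -> exists N : nat, forall n : nat, (N <= n)%coq_nat ->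
    Rle (Rabs (a n)) (Rmult eps (Rabs (b n))).

Definition little_omega (a b : nat -> R) : Prop := little_o b a.

(* If [t(v) = 0] then [v] lies on a cycle [v -> x_1 -> ... -> x_j -> v]
   of distinct points.  Exchanging the images of two points not yet visited
   preserves the degree sequence, so each successive image is distributed
   proportionally to the degrees of the remaining points; the probability of
   such a cycle is [d_v W_j / n ^_ (j+1)], where [W_j] sums [d x_1 ... d x_j]
   over ordered tuples of distinct points other than [v].  The ratios
   [q_j = W_j / n ^_ j] satisfy [q_(j+1) <= q_j (1 - j sigma^2 / (2n))] as long
   as [j Delta <= n], hence decay like [exp (- sigma^2 j^2 / (4n))].  Summing up
   to the scale [K = n / (Delta ln n)] gives [P (t(v) = 0) <= 2 / ln n + 1 / n]
   as soon as [Delta^2 (ln n)^3 <= n sigma^2 / 64], which holds eventually by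
   [h3]. *)

From Stdlib Require Import Reals Lra Lia.
From mathcomp Require Import all_boot fingroup perm zify.

Set Implicit Arguments.
Unset Strict Implicit.
Unset Printing Implicit Defensive.

Lemma card_sum_nat (T : finType) (P : pred T) :
  #|[pred z | P z]| = \sum_z (P z : nat).
Proof.
rewrite -sum1_card big_mkcond /=.
by apply: eq_bigr => z _; rewrite unfold_in /=; case: (P z).
Qed.

Lemma sum_setT (T : finType) (F : T -> nat) : \sum_(x in [set: T]) F x = \sum_x F x.
Proof. by apply: eq_bigl => x; rewrite inE. Qed.

Lemma setD1_id (T : finType) (A : {set T}) x : x \notin A -> A :\ x = A.
Proof. by move=> xA; apply/setDidPl; rewrite disjoint_sym disjoints1. Qed.

Section OrderedWeight.
Variables (n : nat) (d : 'I_n -> nat).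

(* [ordered_weight j A] is the sum of [d x_1 * ... * d x_j] over all sequences
   of [j] pairwise distinct elements of [A]. *)
Fixpoint ordered_weight (j : nat) (A : {set 'I_n}) : nat :=
  if j is j'.+1 then \sum_(x in A) d x * ordered_weight j' (A :\ x) else 1.

Lemma ordered_weightS j A :
  ordered_weight j.+1 A = \sum_(x in A) d x * ordered_weight j (A :\ x).
Proof. by []. Qed.

Lemma ordered_weight0 A : ordered_weight 0 A = 1.
Proof. by []. Qed.

Arguments ordered_weight : simpl never.

Definition deg_sum (A : {set 'I_n}) := \sum_(x in A) d x.

Lemma ordered_weight_setD1 j (A : {set 'I_n}) x : x \in A ->
  ordered_weight j.+1 A =
  ordered_weight j.+1 (A :\ x) + j.+1 * d x * ordered_weight j (A :\ x).
Proof.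
elim: j A x => [|j IH] A x xA.
  rewrite ordered_weightS ordered_weight0 (bigD1 x xA) /= addnC !muln1 mul1n.
  congr (_ + _); rewrite ordered_weightS.
  apply: eq_big => [y|y _]; first by rewrite in_setD1 andbC.
  by rewrite ordered_weight0.
rewrite ordered_weightS (bigD1 x xA) /=.
rewrite (eq_bigl (fun y => y \in A :\ x)); last by move=> y; rewrite in_setD1 andbC.
have setD1C y : A :\ x :\ y = A :\ y :\ x by rewrite setDDl setUC -setDDl.
under eq_bigr => y yAx.
  have xAy : x \in A :\ y.
    by move: yAx; rewrite !in_setD1 xA andbT eq_sym => /andP[].
  rewrite (IH _ _ xAy) mulnDr -!setD1C [d y * (_ * _)]mulnCA.
over.
rewrite big_split /= -big_distrr /= -!ordered_weightS; lia.
Qed.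

Lemma ordered_weight_setD1_le j (A : {set 'I_n}) x :
  ordered_weight j (A :\ x) <= ordered_weight j A.
Proof.
have [xA|xA] := boolP (x \in A); last by rewrite setD1_id.
by case: j => [|j] //; rewrite (ordered_weight_setD1 j xA) leq_addr.
Qed.

Lemma ordered_weight_setC1_le j v :
  ordered_weight j (~: [set v]) <= ordered_weight j [set: 'I_n].
Proof. by rewrite -setTD ordered_weight_setD1_le. Qed.

Lemma deg_sum_setD1_le (A : {set 'I_n}) x : deg_sum (A :\ x) <= deg_sum A.
Proof.
have [xA|xA] := boolP (x \in A); last by rewrite setD1_id.
by rewrite /deg_sum [X in _ <= X](big_setD1 _ xA) leq_addl.
Qed.

Lemma ordered_weightS_le j (A : {set 'I_n}) :
  ordered_weight j.+1 A <= deg_sum A * ordered_weight j A.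
Proof.
rewrite ordered_weightS /deg_sum big_distrl /=.
by apply: leq_sum => x _; rewrite leq_mul2l ordered_weight_setD1_le orbT.
Qed.

Lemma ordered_weightS_le_setD1 j (A : {set 'I_n}) x : x \in A ->
  ordered_weight j.+1 A <= ordered_weight j (A :\ x) * (deg_sum A + j.+1 * d x).
Proof.
move=> xA; rewrite (ordered_weight_setD1 j xA) mulnDr [_ * d x * _]mulnC.
rewrite leq_add // mulnC.
by apply: leq_trans (ordered_weightS_le _ _) _; rewrite leq_mul2r deg_sum_setD1_le orbT.
Qed.

Lemma ordered_weight_rec j (A : {set 'I_n}) :
  ordered_weight j.+2 A + j.+1 * \sum_(x in A) d x ^ 2 * ordered_weight j (A :\ x) =
  deg_sum A * ordered_weight j.+1 A.
Proof.
rewrite [ordered_weight j.+2 A]ordered_weightS /deg_sum big_distrl big_distrr /=.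
by rewrite -big_split /=; apply: eq_bigr => x xA; rewrite (ordered_weight_setD1 j xA); lia.
Qed.

End OrderedWeight.

Section Exchange.
Variables (n : nat) (d : 'I_n -> nat).
Local Notation FT := {ffun 'I_n -> 'I_n}.

Definition swap_arg (x x' : 'I_n) (f : FT) : FT := [ffun z => f (tperm x x' z)].

Lemma swap_argK x x' : involutive (swap_arg x x').
Proof. by move=> f; apply/ffunP => z; rewrite !ffunE tpermK. Qed.

Lemma has_degrees_swap_arg x x' f :
  has_degrees d f -> has_degrees d (swap_arg x x' f).
Proof.
move=> /forallP degf; apply/forallP => i; rewrite -(eqP (degf i)) !card_sum_nat.
rewrite (reindex_inj (@perm_inj _ (tperm x x'))) /=.
by apply/eqP; apply: eq_bigr => z _; rewrite ffunE tpermK.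
Qed.

Definition exchangeable (B : pred FT) (X Y : {set 'I_n}) :=
  [/\ forall f, B f -> has_degrees d f,
      forall f x x', x \notin X -> x' \notin X -> B f -> B (swap_arg x x' f) &
      forall f x, B f -> x \in X -> f x \in Y].

Lemma card_exchangeable_image B X Y x x' y :
  exchangeable B X Y -> x \notin X -> x' \notin X ->
  #|[pred f | B f && (f x == y)]| = #|[pred f | B f && (f x' == y)]|.
Proof.
case=> _ B_swap _.
wlog suff le_xx' : x x' / x \notin X -> x' \notin X ->
    #|[pred f | B f && (f x == y)]| <= #|[pred f | B f && (f x' == y)]|.
  by move=> xX x'X; apply/eqP; rewrite eqn_leq !le_xx'.
move=> xX x'X; rewrite !card_sum_nat.
rewrite [X in _ <= X](reindex_inj (inv_inj (swap_argK x x'))) /=.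
apply: leq_sum => f _; case/boolP: (B f && (f x == y)) => //= /andP[Bf /eqP fx].
by rewrite B_swap //= ffunE tpermR fx eqxx.
Qed.

(* Each [f] in [B] sends exactly [d y] points of [~: X] to [y], and by
   [card_exchangeable_image] all points of [~: X] are equally often sent to [y]. *)
Lemma card_exchangeable B X Y x y :
  exchangeable B X Y -> x \notin X -> y \notin Y ->
  #|[pred f | B f && (f x == y)]| * #|~: X| = #|[pred f | B f]| * d y.
Proof.
move=> exB xX yY.
have -> : #|[pred f | B f && (f x == y)]| * #|~: X| =
          \sum_(x' in ~: X) #|[pred f | B f && (f x' == y)]|.
  rewrite -sum1_card big_distrr /= muln1; apply: eq_bigr => x'; rewrite inE => x'X.
  exact: card_exchangeable_image exB xX x'X.
under eq_bigr do rewrite card_sum_nat.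
rewrite exchange_big /= card_sum_nat big_distrl /=.
apply: eq_bigr => f _; case Bf: (B f); last by rewrite big1.
case: exB => degB _ BXY.
move/forallP: (degB f Bf) => /(_ y) /eqP <-; rewrite card_sum_nat mul1n.
rewrite [RHS](bigID (mem (~: X))) /= [X in _ = _ + X]big1 ?addn0 //.
move=> z; rewrite inE negbK => zX; apply/eqP; rewrite eqb0; apply/negP => /eqP fz.
by move: (BXY f z Bf zX); rewrite fz (negbTE yY).
Qed.

Lemma exchangeable_fix B X Y u y :
  exchangeable B X Y -> u \notin X ->
  exchangeable [pred f | B f && (f u == y)] (u |: X) (y |: Y).
Proof.
case=> degB B_swap BXY uX; split.
- by move=> f /andP[/degB].
- move=> f x x'; rewrite !inE !negb_or => /andP[xu xX] /andP[x'u x'X] /andP[Bf fu].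
  by rewrite /= B_swap //= ffunE tpermD // eq_sym.
- move=> f x /andP[Bf /eqP fu]; rewrite !inE => /orP[/eqP ->|xX]; first by rewrite fu eqxx.
  by rewrite BXY ?orbT.
Qed.

End Exchange.

Section FreshPath.
Variables (n : nat) (d : 'I_n -> nat) (v : 'I_n).
Local Notation FT := {ffun 'I_n -> 'I_n}.

(* [fresh_path j f u W]: the points [f u, ..., f^j u] are pairwise distinct and
   outside [W], and [f^(j+1) u = v]. *)
Fixpoint fresh_path (j : nat) (f : FT) (u : 'I_n) (W : {set 'I_n}) : bool :=
  if j is j'.+1 then (f u \notin W) && fresh_path j' f (f u) (f u |: W)
  else f u == v.

Lemma card_fresh_pathS (B : pred FT) j u W :
  #|[pred f | B f && fresh_path j.+1 f u W]| =
  \sum_(y in ~: W) #|[pred f | (B f && (f u == y)) && fresh_path j f y (y |: W)]|.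
Proof.
under [RHS]eq_bigr do rewrite card_sum_nat.
rewrite exchange_big /= card_sum_nat; apply: eq_bigr => f _.
have [fuW|fuW] := boolP (f u \in W).
  rewrite /= andbF big1 // => y; rewrite inE => yW.
  have /negbTE -> : f u != y by apply: contraNneq yW => <-.
  by rewrite andbF.
rewrite (bigD1 (f u)) ?inE //= big1 ?addn0; first by rewrite eqxx andbT.
by move=> y /andP[_ /negbTE yfu]; rewrite eq_sym yfu andbF.
Qed.

Lemma card_fresh_path j B X Y u :
  exchangeable d B X Y -> u \notin X -> Y \subset u |: X ->
  v \in u |: X -> v \notin Y ->
  #|[pred f | B f && fresh_path j f u (u |: X)]| * #|~: X| ^_ j.+1 =
  #|[pred f | B f]| * d v * ordered_weight d j (~: (u |: X)).
Proof.
elim: j B X Y u => [|j IH] B X Y u exB uX YuX vuX vY.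
  by rewrite ffactn1 ordered_weight0 muln1; apply: card_exchangeable exB uX vY.
have setCU1 : ~: (u |: X) = ~: X :\ u by apply/setP => z; rewrite !inE negb_or andbC.
have card_setCU1 : #|~: (u |: X)| = #|~: X|.-1.
  by rewrite setCU1 (cardsD1 u (~: X)) inE uX.
rewrite card_fresh_pathS big_distrl ffactnS ordered_weightS big_distrr /=.
apply: eq_bigr => y; rewrite inE => yuX.
have yY : y \notin Y by apply: contra yuX; apply: (subsetP YuX).
have sub' : y |: Y \subset y |: (u |: X) by apply: setUS.
have vuX' : v \in y |: (u |: X) by rewrite inE vuX orbT.
have vY' : v \notin y |: Y.
  by rewrite !inE (negbTE vY) orbF; apply: contraNneq yuX => <-.
have -> : ~: (u |: X) :\ y = ~: (y |: (u |: X)).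
  by apply/setP => z; rewrite !inE !negb_or.
rewrite mulnCA -card_setCU1 (IH _ _ _ _ (exchangeable_fix y exB uX) yuX sub' vuX' vY').
rewrite 2!mulnA [#|~: X| * _]mulnC (card_exchangeable exB uX yY).
by rewrite -!mulnA [d y * (d v * _)]mulnCA.
Qed.

End FreshPath.

Section TailZero.
Variables (n : nat) (d : 'I_n -> nat) (v : 'I_n).
Local Notation FT := {ffun 'I_n -> 'I_n}.

Lemma fresh_path_iter j (f : FT) u (W : {set 'I_n}) :
  iter j.+1 f u = v ->
  (forall i, 0 < i <= j -> iter i f u \notin W) ->
  (forall i i', i' < i <= j -> iter i f u != iter i' f u) ->
  fresh_path v j f u W.
Proof.
elim: j u W => [|j IH] u W fjv fW f_inj /=; first by rewrite -fjv.
rewrite (fW 1) //=; apply: IH; first by rewrite -iterSr.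
- move=> i /andP[i0 ij]; rewrite inE negb_or -!iterSr.
  by rewrite in_set1 (f_inj i.+1 1) ?fW //=; lia.
- by move=> i i' /andP[ii' ij]; rewrite -!iterSr; apply: f_inj; lia.
Qed.

Lemma tail_len0_return (f : FT) :
  tail_len f v = 0 -> exists k, (0 < k) && (iter k f v == v).
Proof.
rewrite /tail_len /six_len; set t := find _ _ => /=.
by case: eqP => [vft _|//]; exists t.+1; rewrite /= -vft eqxx.
Qed.

Lemma return_fresh_cycle (f : FT) :
  (exists k, (0 < k) && (iter k f v == v)) ->
  exists2 j, j < n & fresh_path v j f v [set v].
Proof.
move=> ex_ret; case: (ex_minnP ex_ret) => k /andP[k0 /eqP fkv] k_min.
have f_inj i i' : i' < i < k -> iter i f v != iter i' f v.
  move=> /andP[ii' ik]; apply/eqP => fii'.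
  suff: k <= k - i + i' by lia.
  apply: k_min; rewrite addn_gt0 subn_gt0 ik /=.
  by rewrite iterD -fii' -iterD subnK ?fkv // ltnW.
have kn : k <= n.
  have inj : injective (fun i : 'I_k => iter i f v).
    move=> i i' /eqP fii'; apply/val_inj/eqP; apply: contraTT fii' => ne.
    case: (ltngtP i i') => [lt|gt|/eqP]; last by rewrite (negbTE ne).
      by rewrite eq_sym f_inj // lt ltn_ord.
    by rewrite f_inj // gt ltn_ord.
  by have := leq_card _ inj; rewrite !card_ord.
exists k.-1; first lia.
apply: fresh_path_iter; first by rewrite prednK.
- by move=> i /andP[i0 ik]; rewrite inE (f_inj i 0) //; lia.
- by move=> i i' /andP[ii' ik]; apply: f_inj; lia.
Qed.

Lemma card_tail0_le :
  #|[pred f : FT | has_degrees d f && (tail_len f v == 0)]| <=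
  \sum_(j < n) #|[pred f : FT | has_degrees d f && fresh_path v j f v [set v]]|.
Proof.
under eq_bigr do rewrite card_sum_nat.
rewrite exchange_big /= card_sum_nat; apply: leq_sum => f _.
case: (has_degrees d f) => //=; case t0: (tail_len f v == 0) => //.
have [j jn fj] := return_fresh_cycle (tail_len0_return (eqP t0)).
by rewrite (bigD1 (Ordinal jn)) //= fj.
Qed.

Lemma card_fresh_cycle j :
  #|[pred f : FT | has_degrees d f && fresh_path v j f v [set v]]| * n ^_ j.+1 =
  #|[pred f : FT | has_degrees d f]| * d v * ordered_weight d j (~: [set v]).
Proof.
have exB : exchangeable d (has_degrees d) set0 set0.
  by split=> // [f x x' _ _|f x _]; [apply: has_degrees_swap_arg | rewrite inE].
have := @card_fresh_path n d v j _ _ _ v exB.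
by rewrite setC0 cardsT card_ord setU0 => ->; rewrite ?inE ?sub0set.
Qed.

End TailZero.

Section DegreeSequence.
Variables (n : nat) (d : 'I_n -> nat).
Hypothesis d_sum : is_degree_seq d.
Local Notation Delta := (Delta_max d).
Local Notation W k := (ordered_weight d k [set: 'I_n]).

Lemma deg_sum_setT : deg_sum d [set: 'I_n] = n.
Proof. by rewrite /deg_sum sum_setT. Qed.

Lemma Delta_max_gt0 : 0 < n -> 0 < Delta.
Proof.
move=> n_gt0; have : n <= n * Delta.
  rewrite -{1}d_sum -[n in n * _]card_ord -sum1_card big_distrl /=.
  by apply: leq_sum => x _; rewrite mul1n leq_bigmax.
by case: Delta => //; rewrite muln0; lia.
Qed.

Lemma sum_sq_le : \sum_(x < n) d x ^ 2 <= Delta * n.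
Proof.
rewrite [X in _ <= X](_ : _ = \sum_(x < n) Delta * d x); last by rewrite -big_distrr /= d_sum.
by apply: leq_sum => x _; rewrite expnS expn1 leq_mul2r leq_bigmax orbT.
Qed.

Lemma ordered_weightS_setT_le k : W k.+1 + k * W k <= n * W k.
Proof.
case: k => [|k].
  rewrite mul0n addn0 ordered_weight0 muln1 ordered_weightS.
  by under eq_bigr do rewrite ordered_weight0 muln1; rewrite -/(deg_sum d _) deg_sum_setT.
have -> : n * W k.+1 = deg_sum d [set: 'I_n] * W k.+1 by rewrite deg_sum_setT.
rewrite -ordered_weight_rec leq_add2l leq_mul2l ordered_weightS; apply/orP; right.
apply: leq_sum => x _; rewrite leq_mul2r expnS expn1; apply/orP; right.
by case: (d x) => // m; rewrite leq_pmulr.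
Qed.

Definition sq_excess := \sum_(x < n) (d x ^ 2 - d x).

Definition sq_excess_weight k :=
  \sum_(x < n) (d x ^ 2 - d x) * ordered_weight d k ([set: 'I_n] :\ x).

Lemma sq_excess_add_n : sq_excess + n = \sum_(x < n) d x ^ 2.
Proof.
rewrite [X in _ + X = _](_ : n = \sum_(x < n) d x) // /sq_excess -big_split /=.
apply: eq_bigr => x _.
by rewrite subnK // expnS expn1; case: (d x) => // m; rewrite leq_pmull.
Qed.

Lemma ordered_weight_rec_setT k :
  W k.+2 + k.+1 * (W k.+1 + sq_excess_weight k) = n * W k.+1.
Proof.
have -> : n * W k.+1 = deg_sum d [set: 'I_n] * W k.+1 by rewrite deg_sum_setT.
rewrite -ordered_weight_rec; congr (_ + _ * _).
rewrite ordered_weightS /sq_excess_weight !sum_setT -big_split /=.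
apply: eq_bigr => x _; rewrite -mulnDl subnKC // expnS expn1.
by case: (d x) => // m; rewrite leq_pmulr.
Qed.

Lemma sq_excess_weight_ge k :
  sq_excess * W k.+1 <= sq_excess_weight k * (n + k.+1 * Delta).
Proof.
rewrite /sq_excess /sq_excess_weight !big_distrl /=; apply: leq_sum => x _.
rewrite -mulnA leq_mul2l; apply/orP; right.
apply: leq_trans (ordered_weightS_le_setD1 _ _ (_ : x \in [set: 'I_n])) _; first by rewrite inE.
by rewrite deg_sum_setT leq_mul2l leq_add2l leq_mul2l leq_bigmax !orbT.
Qed.

End DegreeSequence.

Local Open Scope R_scope.

Lemma INR_addn (a b : nat) : INR (a + b)%N = INR a + INR b.
Proof. by rewrite addnE plus_INR. Qed.

Lemma INR_muln (a b : nat) : INR (a * b)%N = INR a * INR b.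
Proof. by rewrite mulnE mult_INR. Qed.

Lemma INR_subn (a b : nat) : (b <= a)%N -> INR (a - b)%N = INR a - INR b.
Proof. by move=> ba; rewrite subnE minus_INR //; apply/leP. Qed.

Lemma INR_leq (a b : nat) : (a <= b)%N -> INR a <= INR b.
Proof. by move=> ab; apply: le_INR; apply/leP. Qed.

Lemma INR_ltn (a b : nat) : (a < b)%N -> INR a < INR b.
Proof. by move=> ab; apply: lt_INR; apply/ltP. Qed.

Lemma Rdiv_ge0 a b : 0 <= a -> 0 < b -> 0 <= a / b.
Proof. by move=> a_ge0 b_gt0; apply: Rmult_le_pos => //; apply/Rlt_le/Rinv_0_lt_compat. Qed.

Lemma nat_floor x : 0 <= x -> exists K : nat, INR K <= x < INR K + 1.
Proof.
move=> x_ge0; have [m xm] := INR_archimed 1 x Rlt_0_1.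
have ex : exists m, if Rlt_dec x (INR m) then true else false.
  by exists m; case: Rlt_dec => //; rewrite Rmult_1_r in xm.
case: (ex_minnP ex) => -[|K]; case: Rlt_dec => //= xK _ K_min; first lra.
exists K; split; last by rewrite -S_INR.
apply: Rnot_lt_le => Kx; have := K_min K; case: Rlt_dec => // _ /(_ isT); lia.
Qed.

Fixpoint sumR (f : nat -> R) (m : nat) : R :=
  if m is m'.+1 then sumR f m' + f m' else 0.

Lemma sumR_le f g m : (forall k, (k < m)%N -> f k <= g k) -> sumR f m <= sumR g m.
Proof.
elim: m => [|m IH] fg /=; first lra.
by have := fg m (ltnSn m); have := IH (fun k km => fg k (ltnW km)); lra.
Qed.

Lemma sumR_ge0 f m : (forall k, (k < m)%N -> 0 <= f k) -> 0 <= sumR f m.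
Proof.
move=> f_ge0; rewrite -[0](_ : sumR (fun=> 0) m = 0); first exact: sumR_le.
by elim: m {f_ge0} => //= m ->; lra.
Qed.

Lemma sumR_const c m : sumR (fun=> c) m = INR m * c.
Proof. by elim: m => [|m IH]; rewrite ?S_INR /= ?IH; [lra | ring]. Qed.

Lemma sumR_mull r f m : sumR (fun k => r * f k) m = r * sumR f m.
Proof. by elim: m => [|m IH] /=; [lra | rewrite IH; ring]. Qed.

Lemma sumR_split f a b :
  sumR f (a + b) = sumR f a + sumR (fun k => f (a + k)%N) b.
Proof. by elim: b => [|b IH] /=; [rewrite addn0; lra | rewrite addnS /= IH; lra]. Qed.

Lemma INR_sum (F : nat -> nat) m :
  INR (\sum_(j < m) F j) = sumR (fun j => INR (F j)) m.
Proof. by elim: m => [|m IH]; rewrite ?big_ord0 // big_ord_recr INR_addn IH. Qed.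

Section DecaySum.
Variables (N K : nat) (s : R) (q : nat -> R).
Hypotheses (K_ge2 : (2 <= K)%N) (K_le : (2 * K <= N)%N).
Hypotheses (q0 : q 0%N = 1) (q_ge0 : forall k, 0 <= q k).
Hypothesis q_nonincr : forall k, (k < N)%N -> q k.+1 <= q k.
Hypothesis q_decay :
  forall j, (0 < j < K)%N -> q j.+1 <= q j * (1 - INR j * (s / (2 * INR N))).

Local Notation c := (s / (4 * INR N)).

Let N_gt0 : 0 < INR N.
Proof. by apply: lt_0_INR; apply/ltP; lia. Qed.

(* Telescoping [1 - t <= exp (- t)] over the decay steps [1, ..., j - 1]. *)
Lemma decay_exp j : (j <= K)%N -> q j <= exp (- (c * INR j * (INR j - 1))).
Proof.
elim: j => [|[|j] IH] jK.
- by rewrite q0 /= (_ : - _ = 0) ?exp_0; [lra | ring].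
- by rewrite (_ : - _ = 0) ?exp_0; [rewrite -q0; apply: q_nonincr; lia | simpl; ring].
have step := q_decay (j := j.+1) ltac:(lia).
have t_le := exp_ineq1_le (- (INR j.+1 * (s / (2 * INR N)))).
have := IH (ltnW jK); have := q_ge0 j.+1 => qj_ge0 qj_le.
apply: (Rle_trans _ _ _ step).
apply: (Rle_trans _ (q j.+1 * exp (- (INR j.+1 * (s / (2 * INR N)))))).
  by apply: Rmult_le_compat_l; lra.
apply: (Rle_trans _ (exp (- (c * INR j.+1 * (INR j.+1 - 1))) *
                      exp (- (INR j.+1 * (s / (2 * INR N)))))).
  by apply: Rmult_le_compat_r; [apply/Rlt_le/exp_pos | lra].
by rewrite -exp_plus; right; congr exp; rewrite (S_INR j.+1); field; have := N_gt0; lra.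
Qed.

Lemma decay_le1 k : (k <= N)%N -> q k <= 1.
Proof. by elim: k => [|k IH] kN; [lra | have := q_nonincr kN; have := IH (ltnW kN); lra]. Qed.

Lemma decay_le_K k : (K <= k < N)%N -> q k <= q K.
Proof.
elim: k => [|k IH] /andP[Kk kN]; first lia.
case: (eqVneq K k.+1) => [->|neK]; first lra.
by have := q_nonincr (ltnW kN); have := IH ltac:(lia); lra.
Qed.

(* Up to [K] the summands are at most [2 / N]; beyond [K] they are at most [q K]. *)
Lemma decay_sum_le :
  sumR (fun k => q k / (INR N - INR k)) N <=
  2 * INR K / INR N + INR N * exp (- (c * INR K * (INR K - 1))).
Proof.
have N_pos := N_gt0; have KN : (K <= N)%N by lia.
rewrite -[X in sumR _ X](subnKC KN) sumR_split.
have head : sumR (fun k => q k / (INR N - INR k)) K <= INR K * (2 / INR N).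
  rewrite -sumR_const; apply: sumR_le => k kK.
  have k_le := @INR_leq (2 * k) N ltac:(lia); rewrite INR_muln /= in k_le.
  have qk_le1 := @decay_le1 k ltac:(lia); have qk_ge0 := q_ge0 k.
  apply: (Rle_trans _ (1 / (INR N - INR k))).
    by apply: Rmult_le_compat_r; [apply/Rlt_le/Rinv_0_lt_compat|]; lra.
  rewrite /Rdiv !Rmult_1_l (_ : 2 * / INR N = / (INR N / 2)); last by field; lra.
  by apply: Rinv_le_contravar; lra.
have tail : sumR (fun k => q (K + k)%N / (INR N - INR (K + k)%N)) (N - K) <=
            INR (N - K) * q K.
  rewrite -sumR_const; apply: sumR_le => k kNK.
  have k_le := @INR_leq (K + k + 1) N ltac:(lia); rewrite !INR_addn /= in k_le.
  have qk_le := @decay_le_K (K + k) ltac:(lia); have qk_ge0 := q_ge0 (K + k).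
  apply: (Rle_trans _ (q (K + k)%N / 1)); last lra.
  by apply: Rmult_le_compat_l => //; apply: Rinv_le_contravar; rewrite ?INR_addn; lra.
have := decay_exp (leqnn K); have := INR_leq (leq_subr K N); have := pos_INR (N - K).
have := q_ge0 K => qK_ge0 NK_ge0 NK_le qK_le.
have : INR (N - K) * q K <= INR N * exp (- (c * INR K * (INR K - 1))).
  by apply: Rmult_le_compat => //; lra.
rewrite (_ : 2 * INR K / INR N = INR K * (2 / INR N)); last by field; lra.
lra.
Qed.

End DecaySum.

Lemma sigma_sqE n (d : 'I_n -> nat) :
  sigma_sq d = INR (\sum_(x < n) d x ^ 2)%N / INR n - 1.
Proof.
rewrite /sigma_sq; congr (INR _ / _ - _); apply: eq_bigr => x _.
by rewrite /= Nat.mul_1_r expnS expn1 mulnE.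
Qed.

Section WeightRatio.
Variables (n : nat) (d : 'I_n -> nat).
Hypotheses (d_sum : is_degree_seq d) (n_gt0 : (0 < n)%N).
Local Notation Delta := (Delta_max d).
Local Notation W k := (ordered_weight d k [set: 'I_n]).

Let INR_n_gt0 : 0 < INR n.
Proof. exact: INR_ltn n_gt0. Qed.

Lemma sq_excess_INR : INR (sq_excess d) = INR n * sigma_sq d.
Proof.
have := f_equal INR (sq_excess_add_n d_sum); rewrite INR_addn => sum_sq.
by rewrite sigma_sqE -sum_sq; field; have := INR_n_gt0; lra.
Qed.

Lemma sigma_sq_ge0 : 0 <= sigma_sq d.
Proof.
have := sq_excess_INR; have := pos_INR (sq_excess d); have := INR_n_gt0; nra.
Qed.

Lemma sigma_sq_le_Delta : sigma_sq d <= INR Delta.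
Proof.
rewrite sigma_sqE; have := INR_leq (sum_sq_le d_sum); rewrite INR_muln.
have := INR_n_gt0; move: (INR (\sum_(x < n) d x ^ 2)) (INR n) => S N N_gt0 S_le.
apply: (Rmult_le_reg_r N); first lra.
by rewrite Rmult_minus_distr_r /Rdiv Rmult_assoc Rinv_l; lra.
Qed.

(* [wratio k] is the ratio of the ordered weight [W k] to its value [n ^_ k]
   for the all-ones degree sequence. *)
Definition wratio k := INR (W k) / INR (n ^_ k).

Lemma INR_ffact_gt0 k : (k <= n)%N -> 0 < INR (n ^_ k).
Proof. by move=> kn; apply: lt_0_INR; apply/ltP; rewrite ffact_gt0. Qed.

Lemma INR_ffactS k : (k < n)%N -> INR (n ^_ k.+1) = INR (n ^_ k) * (INR n - INR k).
Proof. by move=> kn; rewrite ffactnSr INR_muln INR_subn // ltnW. Qed.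

Lemma wratio0 : wratio 0 = 1.
Proof. by rewrite /wratio ordered_weight0 ffactn0 /=; field. Qed.

Lemma wratio_ge0 k : 0 <= wratio k.
Proof.
have [kn|nk] := leqP k n; first exact/Rdiv_ge0/INR_ffact_gt0/kn/pos_INR.
by rewrite /wratio ffact_small //= Rdiv_0_r; lra.
Qed.

Lemma wratio_nonincr k : (k < n)%N -> wratio k.+1 <= wratio k.
Proof.
move=> kn; rewrite /wratio INR_ffactS //.
have := INR_leq (ordered_weightS_setT_le d_sum k); rewrite !INR_addn !INR_muln => W_le.
have := INR_ltn kn; have := INR_ffact_gt0 (ltnW kn); have := pos_INR (W k).
move: (INR (W k.+1)) (INR (W k)) (INR (n ^_ k)) W_le => w1 w0 F W_le w0_ge0 F_gt0 kn'.
apply: (Rmult_le_reg_r (F * (INR n - INR k))); first by apply: Rmult_lt_0_compat; lra.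
have -> : w1 / (F * (INR n - INR k)) * (F * (INR n - INR k)) = w1 by field; lra.
have -> : w0 / F * (F * (INR n - INR k)) = INR n * w0 - INR k * w0 by field; lra.
lra.
Qed.

(* The recursion for [W] loses [k.+1 * sq_excess_weight k], which is at least
   half of [sigma_sq d * W k.+1] as long as [k.+1 * Delta <= n]. *)
Lemma ordered_weight_decay k : (k.+1 * Delta <= n)%N ->
  INR (W k.+2) <= (INR n - INR k.+1) * INR (W k.+1) - INR k.+1 * sigma_sq d * INR (W k.+1) / 2.
Proof.
move=> kDelta.
have := f_equal INR (ordered_weight_rec_setT d_sum k); rewrite INR_addn !INR_muln INR_addn.
have := INR_leq (sq_excess_weight_ge d_sum k); rewrite !INR_muln INR_addn INR_muln sq_excess_INR.
have := INR_leq kDelta; rewrite INR_muln.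
have := pos_INR (W k.+1); have := pos_INR (sq_excess_weight d k); have := sigma_sq_ge0.
have := INR_n_gt0; have := lt_0_INR k.+1 (Nat.lt_0_succ k).
move: (INR (W k.+2)) (INR (W k.+1)) (INR (sq_excess_weight d k)) (INR k.+1).
move=> w2 w1 V j j_gt0 n_pos s_ge0 V_ge0 w1_ge0 jD ge rec.
have excess_le : sigma_sq d * w1 <= 2 * V.
  have : INR n * sigma_sq d * w1 <= V * (2 * INR n) by nra.
  nra.
have := Rmult_le_compat_l j _ _ (Rlt_le _ _ j_gt0) excess_le.
lra.
Qed.

Lemma wratio_decay k : (k.+1 < n)%N -> (k.+1 * Delta <= n)%N ->
  wratio k.+2 <= wratio k.+1 * (1 - INR k.+1 * (sigma_sq d / (2 * INR n))).
Proof.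
move=> kn kDelta; rewrite /wratio INR_ffactS //.
have := ordered_weight_decay kDelta; have := INR_ltn kn; have := INR_ffact_gt0 (ltnW kn).
have := pos_INR (W k.+1); have := sigma_sq_ge0; have := INR_n_gt0.
have := lt_0_INR k.+1 (Nat.lt_0_succ k).
move: (INR (W k.+2)) (INR (W k.+1)) (INR (n ^_ k.+1)) (INR k.+1) (sigma_sq d).
move=> w2 w1 F j s j_gt0 n_pos s_ge0 w1_ge0 F_gt0 jn w2_le.
apply: (Rmult_le_reg_r (F * (INR n - j))); first by apply: Rmult_lt_0_compat; lra.
have -> : w2 / (F * (INR n - j)) * (F * (INR n - j)) = w2 by field; lra.
have -> : w1 / F * (1 - j * (s / (2 * INR n))) * (F * (INR n - j)) =
          (INR n - j) * w1 - j * s * w1 / 2 + j * s * w1 * j / (2 * INR n).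
  by field; lra.
suff : 0 <= j * s * w1 * j / (2 * INR n) by lra.
by apply: Rdiv_ge0; [apply: Rmult_le_pos; [apply: Rmult_le_pos|]; nra | lra].
Qed.

End WeightRatio.

Section TailProbability.
Variables (n : nat) (d : 'I_n -> nat) (v : 'I_n).
Local Notation FT := {ffun 'I_n -> 'I_n}.
Local Notation Delta := (Delta_max d).
Local Notation card_deg := #|[pred f : FT | has_degrees d f]|.

Lemma card_fresh_cycle_le j : (j < n)%N ->
  INR #|[pred f : FT | has_degrees d f && fresh_path v j f v [set v]]|
  <= INR card_deg * (INR Delta * (wratio d j / (INR n - INR j))).
Proof.
move=> jn; have := f_equal INR (card_fresh_cycle d v j).
rewrite INR_muln INR_ffactS // !INR_muln.
have := pos_INR (d v); have := INR_leq (leq_bigmax (F := d) v).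
have := INR_leq (ordered_weight_setC1_le d j v).
have := pos_INR (ordered_weight d j (~: [set v])); have := pos_INR card_deg.
have := INR_ffact_gt0 (ltnW jn); have := INR_ltn jn; rewrite /wratio.
move: (INR (ordered_weight d j [set: 'I_n])) (INR (d v)) => W dv.
move: (INR (n ^_ j)) (INR (ordered_weight d j (~: [set v]))).
move=> F Wv jn' F_gt0 c_ge0 Wv_ge0 Wv_le dv_le dv_ge0 card_eq.
apply: (Rmult_le_reg_r (F * (INR n - INR j))); first by apply: Rmult_lt_0_compat; lra.
rewrite card_eq.
have -> : INR card_deg * (INR Delta * (W / F / (INR n - INR j))) * (F * (INR n - INR j))
          = INR card_deg * INR Delta * W by field; lra.
apply: Rmult_le_compat => //; first exact: Rmult_le_pos.
exact: Rmult_le_compat_l.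
Qed.

Lemma prob_tail0_le_sum :
  prob_tail0 d v <= INR Delta * sumR (fun k => wratio d k / (INR n - INR k)) n.
Proof.
rewrite /prob_tail0; set t := #|[pred f : FT | _ && _]|.
have sum_ge0 : 0 <= INR Delta * sumR (fun k => wratio d k / (INR n - INR k)) n.
  apply: Rmult_le_pos; first exact: pos_INR.
  by apply: sumR_ge0 => k kn; apply: Rdiv_ge0; [apply: wratio_ge0 | have := INR_ltn kn; lra].
have [deg0|deg_gt0] := posnP card_deg.
  suff -> : t = 0%N by rewrite /Rdiv Rmult_0_l.
  apply/eqP; rewrite -leqn0 -deg0; apply: subset_leq_card.
  by apply/subsetP => f; rewrite !inE => /andP[].
have card_gt0 : 0 < INR card_deg by apply: lt_0_INR; apply/ltP.
apply: (Rmult_le_reg_r (INR card_deg)) => //.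
rewrite [in X in X <= _]/Rdiv Rmult_assoc Rinv_l ?Rmult_1_r; last lra.
apply: (Rle_trans _ _ _ (INR_leq (card_tail0_le d v))).
rewrite (INR_sum (fun j => #|[pred f : FT | has_degrees d f && fresh_path v j f v [set v]]|)).
rewrite Rmult_comm -!sumR_mull; apply: sumR_le => k kn.
exact: card_fresh_cycle_le.
Qed.

End TailProbability.

Lemma prob_tail0_le_decay n (d : 'I_n -> nat) v K :
  is_degree_seq d -> (2 <= K)%N -> (2 * K <= n)%N -> (K.-1 * Delta_max d <= n)%N ->
  prob_tail0 d v <= INR (Delta_max d) *
    (2 * INR K / INR n + INR n * exp (- (sigma_sq d / (4 * INR n) * INR K * (INR K - 1)))).
Proof.
move=> d_sum K_ge2 K_le KDelta; have n_gt0 : (0 < n)%N by lia.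
apply: (Rle_trans _ _ _ (prob_tail0_le_sum d v)).
apply: Rmult_le_compat_l; first exact: pos_INR.
apply: decay_sum_le => //.
- exact: wratio0.
- exact: wratio_ge0.
- exact: wratio_nonincr d_sum.
case=> [|k] // /andP[_ kK]; apply: (wratio_decay d_sum n_gt0); first lia.
by apply: leq_trans KDelta; rewrite leq_mul2r; apply/orP; right; lia.
Qed.

Section LogScale.
Variables (N D s L : R).
Hypotheses (D_ge1 : 1 <= D) (s_le : s <= D) (L_ge2 : 2 <= L) (expL : exp L = N).
Hypothesis Delta_small : D ^ 2 * L ^ 3 <= N * s / 64.

Let N_gt0 : 0 < N.
Proof. by rewrite -expL; apply: exp_pos. Qed.

Lemma log_scale_ge : 256 * (D * L) <= N.
Proof.
have N_pos := N_gt0.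
have DL3 : D * (L * L * L) <= N / 64.
  apply: (Rmult_le_reg_l D); first lra.
  have : N * s / 64 <= N * D / 64 by apply: Rmult_le_compat_r; [lra | apply: Rmult_le_compat_l; lra].
  by move: Delta_small; rewrite /= !Rmult_1_r; lra.
have LL : 4 <= L * L by nra.
have := Rmult_le_pos (D * L) (L * L - 4) ltac:(nra) ltac:(lra).
nra.
Qed.

(* With [x = N / (D L)] and [K] its integer part, [K (K - 1) >= x^2 / 4], and
   [s x^2 >= 64 N L] is the hypothesis [Delta_small] rearranged. *)
Lemma log_scale_exponent_ge (K : R) :
  N / (D * L) < K + 1 -> 4 * L <= s / (4 * N) * K * (K - 1).
Proof.
have N_pos := N_gt0; have := log_scale_ge; set x := N / (D * L) => x_ge xK.
have DL_gt0 : 0 < D * L by nra.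
have xDL : x * (D * L) = N by rewrite /x; field; lra.
have x256 : 256 <= x by apply: (Rmult_le_reg_r (D * L)) => //; lra.
have KK : x * x / 4 <= K * (K - 1) by nra.
have s_ge0 : 0 <= s.
  have : 0 <= D ^ 2 * L ^ 3 by apply: Rmult_le_pos; apply: pow_le; lra.
  by move: Delta_small; nra.
have sx : 64 * L * N <= s * (x * x).
  apply: (Rmult_le_reg_r (D * L * (D * L))); first nra.
  have -> : s * (x * x) * (D * L * (D * L)) = s * N * N by rewrite -xDL; ring.
  by move: Delta_small; rewrite /= !Rmult_1_r; nra.
have -> : s / (4 * N) * K * (K - 1) = s / (4 * N) * (K * (K - 1)) by ring.
apply: (Rle_trans _ (s / (4 * N) * (x * x / 4))).
  have -> : s / (4 * N) * (x * x / 4) = s * (x * x) / (16 * N) by field; lra.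
  apply: (Rmult_le_reg_r (16 * N)); first lra.
  have -> : s * (x * x) / (16 * N) * (16 * N) = s * (x * x) by field; lra.
  lra.
by apply: Rmult_le_compat_l => //; apply: Rdiv_ge0; lra.
Qed.

Lemma log_scale_tail_le t : D <= N -> 4 * L <= t -> D * (N * exp (- t)) <= 1 / N.
Proof.
move=> D_le t_ge; have N_pos := N_gt0.
have e4 : exp (- (4 * L)) * (N * N * N * N) = 1.
  by rewrite -expL -!exp_plus -exp_0; congr exp; ring.
have et : exp (- t) * (N * N * N * N) <= 1.
  rewrite -e4; apply: Rmult_le_compat_r; first nra.
  by case: (Req_dec t (4 * L)) => [->|ne]; [lra | apply/Rlt_le/exp_increasing; lra].
have := exp_pos (- t); set e := exp (- t) in et * => e_gt0.
apply: (Rmult_le_reg_r N) => //; rewrite /Rdiv Rmult_1_l Rinv_l; last lra.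
have NNe : 0 <= N * N * e by apply: Rmult_le_pos; nra.
have : D * (N * N * e) <= N * (N * N * e) by apply: Rmult_le_compat_r.
have : 1 * (N * N * N * e) <= N * (N * N * N * e).
  by apply: Rmult_le_compat_r; [nra | lra].
lra.
Qed.

Lemma log_scale_head_le K : K <= N / (D * L) -> D * (2 * K / N) <= 2 / L.
Proof.
move=> K_le; have N_pos := N_gt0.
have -> : 2 / L = D * (2 * (N / (D * L)) / N) by field; lra.
apply: Rmult_le_compat_l; first lra.
by apply: Rmult_le_compat_r; [apply/Rlt_le/Rinv_0_lt_compat | ]; lra.
Qed.

End LogScale.

(* The decay bound at the scale [K = floor (n / (Delta L))], [L = ln n]. *)
Lemma prob_tail0_le_log n (d : 'I_n -> nat) v :
  is_degree_seq d -> (0 < n)%N -> 2 <= ln (INR n) ->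
  INR (Delta_max d) ^ 2 * ln (INR n) ^ 3 <= INR n * sigma_sq d / 64 ->
  prob_tail0 d v <= 2 / ln (INR n) + 1 / INR n.
Proof.
move=> d_sum n_gt0 L_ge2 Delta_small.
have s_le := sigma_sq_le_Delta d_sum n_gt0.
set L := ln (INR n) in L_ge2 Delta_small *; set D := INR (Delta_max d) in Delta_small s_le *.
have N_gt0 : 0 < INR n by apply: lt_0_INR; apply/ltP.
have expL : exp L = INR n by rewrite exp_ln.
have D_ge1 : 1 <= D by apply: (INR_leq (Delta_max_gt0 d_sum n_gt0)).
have scale := log_scale_ge D_ge1 s_le L_ge2 expL Delta_small.
have DL_gt0 : 0 < D * L by nra.
have [K [Kx xK]] := nat_floor (x := INR n / (D * L)) (Rdiv_ge0 (Rlt_le _ _ N_gt0) DL_gt0).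
move: Kx xK; set x := INR n / (D * L) => Kx xK.
have xDL : x * (D * L) = INR n by rewrite /x; field; lra.
have x_ge : 256 <= x by apply: (Rmult_le_reg_r (D * L)) => //; lra.
have K_ge2 : (2 <= K)%N by apply/leP/INR_le => /=; lra.
have K_le : (2 * K <= n)%N.
  apply/leP/INR_le; rewrite mult_INR /=.
  have : x * 2 <= x * (D * L) by apply: Rmult_le_compat_l; nra.
  lra.
have KDelta : (K.-1 * Delta_max d <= n)%N.
  apply/leP/INR_le; rewrite mult_INR -/D.
  have : INR K.-1 * D <= INR K * D by apply/Rmult_le_compat_r/INR_leq/leq_pred; lra.
  have : INR K * D <= x * D by apply: Rmult_le_compat_r; lra.
  have : x * D * 1 <= x * D * L by apply: Rmult_le_compat_l; nra.
  have -> : x * D * L = INR n by rewrite -xDL; ring.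
  lra.
apply: (Rle_trans _ _ _ (prob_tail0_le_decay v d_sum K_ge2 K_le KDelta)).
rewrite -/D Rmult_plus_distr_l; apply: Rplus_le_compat.
- exact: (log_scale_head_le D_ge1 L_ge2 expL).
- apply: (log_scale_tail_le D_ge1 expL); first nra.
  exact: (log_scale_exponent_ge D_ge1 s_le L_ge2 expL Delta_small).
Qed.

Lemma prob_tail0_ge0 n (d : 'I_n -> nat) v : 0 <= prob_tail0 d v.
Proof.
rewrite /prob_tail0; set b := #|[pred f | has_degrees d f]|.
have [->|b_gt0] := posnP b; first by rewrite /= Rdiv_0_r; lra.
by apply: Rdiv_ge0; [exact: pos_INR | apply: lt_0_INR; apply/ltP].
Qed.

Lemma Delta_small_of_le_sqrt D N s L : 0 <= D -> 0 < L -> 0 <= N * s ->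
  D <= 1 / 8 * sqrt (N * s / L ^ 3) -> D ^ 2 * L ^ 3 <= N * s / 64.
Proof.
move=> D_ge0 L_gt0 Ns_ge0 D_le; have L3_gt0 : 0 < L ^ 3 by apply: pow_lt.
have y_ge0 : 0 <= N * s / L ^ 3 by apply: Rdiv_ge0.
have := sqrt_sqrt _ y_ge0; have := sqrt_pos (N * s / L ^ 3).
move: (sqrt _) D_le => r D_le r_ge0 rr.
have DD : D ^ 2 <= 1 / 64 * (N * s / L ^ 3) by rewrite -rr; nra.
have -> : N * s / 64 = 1 / 64 * (N * s / L ^ 3) * L ^ 3 by field; lra.
by apply: Rmult_le_compat_r; lra.
Qed.

Lemma ln_eventually_gt B : exists m, forall n, (m <= n)%coq_nat -> B < ln (INR n.+1).
Proof.
have [m expB] := INR_archimed 1 (exp B) Rlt_0_1; rewrite Rmult_1_r in expB.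
exists m => n mn; rewrite -[B]ln_exp; apply: ln_increasing; first exact: exp_pos.
by apply: (Rlt_le_trans _ _ _ expB); apply: le_INR; lia.
Qed.

Lemma log_bound_lt eps L : 0 < eps -> Rmax 2 (3 / eps) < L -> 2 / L + 1 / exp L < eps.
Proof.
move=> eps_gt0 L_gt; have := Rmax_l 2 (3 / eps); have := Rmax_r 2 (3 / eps).
move=> max_ge3 max_ge2; have := exp_ineq1 L ltac:(lra) => expL.
have : 3 / L < eps.
  apply: (Rmult_lt_reg_r L); first lra.
  have -> : 3 / L * L = 3 by field; lra.
  have : 3 / eps * eps < L * eps by apply: Rmult_lt_compat_r; lra.
  have -> : 3 / eps * eps = 3 by field; lra.
  lra.
have : 1 / exp L < 1 / L.
  rewrite /Rdiv !Rmult_1_l; apply: Rinv_lt_contravar; [nra | lra].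
have -> : 3 / L = 2 / L + 1 / L by field; lra.
lra.
Qed.

Theorem corollary3p14
  (d : forall n : nat, 'I_n.+1 -> nat) (v : forall n : nat, 'I_n.+1)
  (hdeg : forall n : nat, is_degree_seq (d n))
  (h1 : little_o (fun n => sigma_sq (d n))
                 (fun n => Rdiv (INR n.+1) (pow (ln (INR n.+1)) 3)))
  (h2 : little_omega (fun n => sigma_sq (d n))
                     (fun n => Rdiv (ln (INR n.+1)) (Rpower (INR n.+1) (Rdiv 1 3))))
  (h3 : little_o (fun n => INR (Delta_max (d n)))
                 (fun n => sqrt (Rdiv (Rmult (INR n.+1) (sigma_sq (d n)))
                                      (pow (ln (INR n.+1)) 3)))) :
  Un_cv (fun n => prob_tail0 (d n) (v n)) 0.
Proof.
move=> eps eps_gt0.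
have [m1 Delta_le] := h3 (1 / 8) ltac:(lra).
have [m2 L_gt] := ln_eventually_gt (Rmax 2 (3 / eps)).
exists (max m1 m2) => n le_n; move: Delta_le L_gt => /(_ n ltac:(lia)) + /(_ n ltac:(lia)).
set L := ln (INR n.+1) => Delta_le L_gt.
have L_ge2 : 2 <= L by have := Rmax_l 2 (3 / eps); lra.
have L_gt0 : 0 < L by lra.
have N_gt0 : 0 < INR n.+1 by apply: lt_0_INR; lia.
have Ns_ge0 : 0 <= INR n.+1 * sigma_sq (d n).
  by apply: Rmult_le_pos; [lra | apply: sigma_sq_ge0].
rewrite Rabs_pos_eq ?Rabs_pos_eq in Delta_le; [| exact: sqrt_pos | exact: pos_INR].
have small := Delta_small_of_le_sqrt (pos_INR _) L_gt0 Ns_ge0 Delta_le.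
have := prob_tail0_le_log (v n) (hdeg n) (ltn0Sn n) L_ge2 small.
have := log_bound_lt eps_gt0 L_gt; rewrite /L exp_ln //.
rewrite /R_dist Rminus_0_r Rabs_pos_eq; [lra | exact: prob_tail0_ge0].
Qed.
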